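(* Let $X$ be a bipartite distance-regular graph of diameter $3$ on $n$ vertices. If $X$ is not a cocktail-party graph, then $\mathrm{motion}(X)\geq \frac{1}{12}n$.
   Context: A distance-regular graph is a connected graph such that for vertices $v,w$ at distance $i$ the numbers of neighbours of $w$ at distance $i-1,i,i+1$ from $v$ are constants depending only on $i$. A cocktail-party graph is a regular complete bipartite graph with one perfect matching removed. The motion of a graph is the minimum, over non-identity automorphisms, of the number of vertices not fixed. *)

From mathcomp Require Import all_boot all_fingroup.
Set Implicit Arguments. Unset Strict Implicit. Unset Printing Implicit Defensive.

Definition simple_graph (T : finType) (e : rel T) : Prop :=
  symmetric e /\ irreflexive e.

Fixpoint ball (T : finType) (e : rel T) (x : T) (k : nat) : {set T} :=
  match k with
  | 0 => [set x]
  | k'.+1 => ball e x k' :|: [set y | [exists z in ball e x k', e z y]]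
  end.

(* graph distance: least k with y in ball e x k; (equals #|T| if y is
   unreachable, which cannot happen in a connected graph) *)
Definition gdist (T : finType) (e : rel T) (x y : T) : nat :=
  find (fun k => y \in ball e x k) (iota 0 #|T|).

Definition gconnected (T : finType) (e : rel T) : Prop :=
  forall x y : T, connect e x y.

Definition distance_regular (T : finType) (e : rel T) : Prop :=
  gconnected e /\
  exists f : nat -> nat -> nat, forall (v w : T) (j : nat),
    let i := gdist e v w in
    [|| j.+1 == i, j == i | j == i.+1] ->
    #|[set u | e w u & gdist e v u == j]| = f i j.

Definition diameter_eq (T : finType) (e : rel T) (d : nat) : Prop :=
  (forall v w : T, gdist e v w <= d) /\ (exists v w : T, gdist e v w = d).

Definition bipartite (T : finType) (e : rel T) : Prop :=
  exists col : T -> bool, forall x y : T, e x y -> col x != col y.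

(* K_{m,m} minus the perfect matching {(false,i),(true,i)} *)
Definition cocktail_rel (m : nat) : rel (bool * 'I_m) :=
  fun p q => (p.1 != q.1) && (p.2 != q.2).

Definition is_cocktail_party (T : finType) (e : rel T) : Prop :=
  exists (m : nat) (f : T -> bool * 'I_m),
    bijective f /\ forall x y : T, e x y = cocktail_rel (f x) (f y).

Definition is_graph_aut (T : finType) (e : rel T) (s : {perm T}) : Prop :=
  forall x y : T, e (s x) (s y) = e x y.

Definition moved (T : finType) (s : {perm T}) : nat := #|[set x | s x != x]|.

(* A bipartite distance-regular graph of diameter 3 is the incidence graph of a
   symmetric 2-(V,k,l) design: the colour classes have V vertices, every vertex has k
   neighbours, two distinct vertices of the same colour have l common neighbours,
   l (V - 1) = k (k - 1), and 0 < l < k because the diameter is 3.  Taking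
   non-neighbours across the classes instead gives the complementary symmetric design
   with parameters V - k and V - 2k + l, which is again non-degenerate unless
   V - k = 1, i.e. unless the graph is a cocktail party graph.
   An automorphism either swaps the two classes, and then moves every vertex, or fixes
   them.  In the latter case, if x is moved, a fixed vertex p of the colour of x has
   l neighbours in common with x and l with s x, and those adjacent to only one of
   them are moved; double counting these incidences gives
   2 #fixed_c <= 2 k + #moved_(~c), and likewise with V - k in place of k.  Hence
   2 #fixed_c <= V + #moved_(~c) for both colours, which adds up to n <= 3 motion. *)

From mathcomp Require Import all_boot all_fingroup zify.
Set Implicit Arguments. Unset Strict Implicit. Unset Printing Implicit Defensive.

Section Distance.
Variables (T : finType) (e : rel T) (x : T).

Lemma mem_ball0 y : (y \in ball e x 0) = (y == x).
Proof. by rewrite inE. Qed.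

Lemma mem_ballS d y :
  (y \in ball e x d.+1) = (y \in ball e x d) || [exists z, (z \in ball e x d) && e z y].
Proof. by rewrite /= in_setU inE. Qed.

Lemma ball_edge d z y : z \in ball e x d -> e z y -> y \in ball e x d.+1.
Proof.
by move=> zd ezy; rewrite mem_ballS; apply/orP; right; apply/existsP; exists z; rewrite zd.
Qed.

Lemma ball_mono d d' : d <= d' -> {subset ball e x d <= ball e x d'}.
Proof.
move=> /subnKC <- y; elim: (d' - d) => [|n IHn yd]; first by rewrite addn0.
by rewrite addnS mem_ballS IHn.
Qed.

Lemma path_ball p : path e x p -> last x p \in ball e x (size p).
Proof.
elim/last_ind: p => [|p z IHp]; first by rewrite mem_ball0.
by rewrite rcons_path last_rcons size_rcons => /andP[/IHp]; apply: ball_edge.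
Qed.

Lemma gdist_le d y : y \in ball e x d -> gdist e x y <= d.
Proof.
have gdist_leT : gdist e x y <= #|T| by rewrite /gdist -[leqRHS](size_iota 0) find_size.
case: (ltnP d #|T|) => [dT yd|/(leq_trans gdist_leT)//].
rewrite leqNgt; apply/negP => /(before_find 0).
by rewrite nth_iota // add0n yd.
Qed.

Lemma notin_ball_gdist d y : d < gdist e x y -> y \notin ball e x d.
Proof. by move=> lt_d; apply/negP => /gdist_le; rewrite leqNgt lt_d. Qed.

Lemma mem_ball_gdist y : connect e x y -> y \in ball e x (gdist e x y).
Proof.
case/connectP => p /shortenP[p' e_p' uniq_p' _] ->.
have p'T : size (x :: p') <= #|T| by rewrite -(card_uniqP uniq_p'); apply: max_card.
have has_d : has (fun d => last x p' \in ball e x d) (iota 0 #|T|).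
  by apply/hasP; exists (size p'); rewrite ?mem_iota ?path_ball.
by have := nth_find 0 has_d; rewrite nth_iota ?add0n // -[ltnRHS](size_iota 0) -has_find.
Qed.

Lemma gdist_refl : gdist e x x = 0.
Proof. by apply/eqP; rewrite -leqn0 gdist_le ?mem_ball0. Qed.

Hypothesis conn : gconnected e.

Lemma gdist_eq0 y : (gdist e x y == 0) = (y == x).
Proof.
apply/eqP/eqP => [d0|->]; last exact: gdist_refl.
by have := mem_ball_gdist (conn x y); rewrite d0 mem_ball0 => /eqP.
Qed.

Lemma gdist_pred_adj d y :
  gdist e x y = d.+1 -> exists2 z, gdist e x z = d & e z y.
Proof.
move=> dy; have := mem_ball_gdist (conn x y); rewrite dy mem_ballS.
rewrite (negbTE (notin_ball_gdist _)) ?dy //= => /existsP[z /andP[zd ezy]].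
exists z => //; apply/eqP; rewrite eqn_leq gdist_le //= leqNgt; apply/negP => lt_z.
move: (ball_edge (mem_ball_gdist (conn x z)) ezy) => /(ball_mono lt_z).
by rewrite (negbTE (notin_ball_gdist _)) ?dy.
Qed.

End Distance.

Section BipartiteGraph.
Variables (T : finType) (e : rel T) (col : T -> bool).
Hypotheses (e_irr : irreflexive e) (conn : gconnected e).
Hypothesis col_e : forall x y, e x y -> col x != col y.

Lemma col_adj x y : e x y -> col y = ~~ col x.
Proof. by move/col_e; case: (col x); case: (col y). Qed.

Lemma gdist_eq1 x y : (gdist e x y == 1) = e x y.
Proof.
apply/eqP/idP => [/gdist_pred_adj[//|z /eqP] | exy].
  by rewrite gdist_eq0 // => /eqP->.
apply/eqP; rewrite eqn_leq gdist_le /=; last by rewrite (@ball_edge _ _ _ 0 x) ?mem_ball0.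
by rewrite lt0n gdist_eq0 //; apply: contraTneq exy => ->; rewrite e_irr.
Qed.

Lemma col_gdist x y : col y = col x (+) odd (gdist e x y).
Proof.
move dy: (gdist e x y) => d; elim: d y dy => [|d IHd] y.
  by move/eqP; rewrite gdist_eq0 // addbF => /eqP->.
by case/gdist_pred_adj => // z /IHd col_z /col_adj->; rewrite col_z /= addbN.
Qed.

Lemma gdist_same_col x y :
  gdist e x y <= 3 -> x != y -> col x = col y -> gdist e x y = 2.
Proof.
move=> le3 nxy cxy; have := col_gdist x y; rewrite cxy -{1}[col y]addbF => /addbI.
have := gdist_eq0 x conn y; rewrite [y == x]eq_sym (negbTE nxy) => /negbT.
by move: le3; case: (gdist e x y) => [|[|[|[|]]]].
Qed.

Lemma aut_col_cases (s : {perm T}) : (forall x y, e (s x) (s y) = e x y) ->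
  (forall x, col (s x) = col x) \/ (forall x, col (s x) != col x).
Proof.
move=> s_aut; pose a := [pred x | col (s x) == col x].
have a_closed : closed e a.
  move=> x y exy; rewrite !inE (col_adj exy) (@col_adj (s x) (s y)) ?s_aut //.
  by case: (col x); case: (col (s x)).
case: (boolP [exists x, col (s x) != col x]) => [/existsP[x0 x0_moves]|/existsPn s_col].
  right=> y; have := closed_connect a_closed (conn x0 y).
  by rewrite !inE (negbTE x0_moves) => <-.
by left=> y; apply/eqP/negPn.
Qed.

End BipartiteGraph.

Lemma sum_card_setI (aT bT : finType) (f : aT -> {set bT}) (A : {set aT}) (B : {set bT}) :
  \sum_(a in A) #|f a :&: B| = \sum_(b in B) #|[set a in A | b \in f a]|.
Proof.
transitivity (\sum_(a in A) \sum_(b in B) (b \in f a : nat)).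
  apply: eq_bigr => a _; rewrite -sum1_card big_mkcond [RHS]big_mkcond.
  by apply: eq_bigr => b _; rewrite inE andbC; case: (b \in B).
rewrite exchange_big; apply: eq_bigr => b _.
rewrite -sum1_card big_mkcond [RHS]big_mkcond.
by apply: eq_bigr => a _; rewrite inE; case: (a \in A).
Qed.

Definition cross (T : finType) (r : rel T) (col : T -> bool) (x : T) : {set T} :=
  [set u | (col u != col x) && r x u].

(* With [col] a proper 2-colouring of the graph [r], [sym_design r col k l] says that the
   colour classes are the points and blocks of a symmetric 2-design; [r] is only read
   across the classes, so its complement [fun a b => ~~ r a b] qualifies as well. *)
Definition sym_design (T : finType) (r : rel T) (col : T -> bool) (k l : nat) : Prop :=
  (forall x, #|cross r col x| = k) /\
  (forall x y, x != y -> col x = col y -> #|cross r col x :&: cross r col y| = l).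

Section SymmetricDesign.
Variables (T : finType) (r : rel T) (col : T -> bool) (k l : nat).
Hypotheses (r_sym : symmetric r) (design : sym_design r col k l).
Local Notation N := (cross r col).

Lemma mem_crossC x u : (u \in N x) = (x \in N u).
Proof. by rewrite !inE eq_sym r_sym. Qed.

Lemma col_cross x u : u \in N x -> col u = ~~ col x.
Proof. by rewrite inE => /andP[]; case: (col u); case: (col x). Qed.

Lemma card_cross x : #|N x| = k.
Proof. exact: design.1. Qed.

Lemma card_crossI x y : x != y -> col x = col y -> #|N x :&: N y| = l.
Proof. exact: design.2. Qed.

Lemma card_col_classN c : 0 < k ->
  #|[set x | col x == c]| = #|[set x | col x == ~~ c]|.
Proof.
move=> k_gt0; apply/eqP; rewrite -(eqn_pmul2r k_gt0) -!sum_nat_const; apply/eqP.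
have := sum_card_setI N [set x | col x == c] [set x | col x == ~~ c].
rewrite (eq_bigr (fun _ => k)) => [->|x]; last first.
  rewrite inE => /eqP cx; rewrite -(card_cross x) (setIidPl _) //.
  by apply/subsetP => u /col_cross; rewrite inE cx => ->.
apply: eq_bigr => u; rewrite inE => /eqP cu; rewrite -(card_cross u); apply: eq_card.
move=> x; rewrite inE mem_crossC !inE cu.
by case: (col x); case: (c); rewrite ?andbF.
Qed.

Section Automorphism.
Variable s : {perm T}.
Hypothesis s_aut : forall x y, r (s x) (s y) = r x y.
Hypothesis s_col : forall x, col (s x) = col x.

Lemma mem_cross_perm x u : (s u \in N (s x)) = (u \in N x).
Proof. by rewrite !inE s_aut !s_col. Qed.

Lemma mem_cross_fixed x u : s u = u -> (u \in N (s x)) = (u \in N x).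
Proof. by move=> su; rewrite -{1}su mem_cross_perm. Qed.

Lemma exists_moved_cross x : l < k -> s x != x -> exists2 u, u \in N x & s u != u.
Proof.
move=> lk sx; have : 0 < #|N x :\: N (s x)|.
  by rewrite cardsD card_cross card_crossI 1?eq_sym ?s_col // subn_gt0.
case/card_gt0P => u /setDP[xu sxu]; exists u => //.
by apply: contraNneq sxu => /mem_cross_fixed->.
Qed.

(* A neighbour of the fixed vertex p adjacent to exactly one of x and s x is moved. *)
Lemma moved_cross_bound x p : s x != x -> s p = p -> col p = col x ->
  2 * l <= #|N p :&: [set B | (col B == ~~ col x) && (s B != B)]|
           + 2 * #|N p :&: (N x :&: N (s x))|.
Proof.
move=> sx sp cpx; set y := s x; set M := [set B | _ && _].
have px : p != x by apply: contraNneq sx => <-; rewrite sp.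
have py : p != y by apply: contraNneq px => p_y; apply/eqP/(perm_inj (s := s)); rewrite sp.
have cpy : col p = col y by rewrite /y s_col.
have split_l : l + l = #|N p :&: (N x :|: N y)| + #|N p :&: (N x :&: N y)|.
  by rewrite setIUr setIIr cardsUI !card_crossI.
have sub : N p :&: (N x :|: N y) \subset (N p :&: M) :|: (N p :&: (N x :&: N y)).
  apply/subsetP => B /setIP[pB /setUP xyB]; rewrite in_setU !in_setI pB inE /=.
  case: (boolP (B \in N x)) => xB; case: (boolP (B \in N y)) => yB;
    rewrite ?orbT ?orbF //.
  - rewrite (col_cross xB) eqxx /=.
    by apply: contraNneq yB => /(mem_cross_fixed x)->.
  - rewrite (col_cross yB) /y s_col eqxx /=.
    by apply: contraNneq xB => /(mem_cross_fixed x)<-.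
  - by case: xyB => B_in; [move: xB | move: yB]; rewrite B_in.
have := subset_leq_card sub; rewrite cardsU; lia.
Qed.

(* Sum the previous bound over the fixed p; a moved B has at most l fixed neighbours,
   all of them common to B and s B. *)
Lemma fixed_le_moved c : 0 < l -> (exists2 x, col x = c & s x != x) ->
  2 * #|[set p | (col p == c) && (s p == p)]|
    <= 2 * k + #|[set B | (col B == ~~ c) && (s B != B)]|.
Proof.
move=> l_gt0 [x <- sx]; set F := [set p | _ && _]; set M := [set B | _ && _].
set C := N x :&: N (s x).
have bound : \sum_(p in F) (2 * l) <= \sum_(p in F) (#|N p :&: M| + 2 * #|N p :&: C|).
  by apply: leq_sum => p; rewrite inE => /andP[/eqP cp /eqP sp]; apply: moved_cross_bound.
rewrite sum_nat_const big_split -big_distrr /= !sum_card_setI in bound.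
have sumM : \sum_(B in M) #|[set p in F | B \in N p]| <= #|M| * l.
  rewrite -sum_nat_const; apply: leq_sum => B; rewrite inE => /andP[_ sB].
  rewrite -(@card_crossI B (s B)) 1?eq_sym ?s_col //; apply/subset_leq_card/subsetP => p.
  rewrite inE => /andP[]; rewrite inE => /andP[_ /eqP sp]; rewrite mem_crossC => pB.
  by rewrite in_setI pB -sp mem_cross_perm.
have sumC : \sum_(B in C) #|[set p in F | B \in N p]| <= #|C| * k.
  rewrite -sum_nat_const; apply: leq_sum => B _; rewrite -(card_cross B).
  by apply/subset_leq_card/subsetP => p; rewrite inE mem_crossC => /andP[].
have card_C : #|C| = l by rewrite card_crossI 1?eq_sym ?s_col.
rewrite -(leq_pmul2l l_gt0); nia.
Qed.

End Automorphism.

Variable V : nat.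
Hypothesis card_class : forall c, #|[set x | col x == c]| = V.

Lemma cross_compl x :
  cross (fun a b => ~~ r a b) col x = [set u | col u == ~~ col x] :\: N x.
Proof. by apply/setP => u; rewrite !inE; case: (col u); case: (col x); case: (r x u). Qed.

Lemma compl_sym_design : sym_design (fun a b => ~~ r a b) col (V - k) (V - (2 * k - l)).
Proof.
have cross_class x : N x :&: [set u | col u == ~~ col x] = N x.
  by apply/setIidPl/subsetP => u /col_cross; rewrite inE => ->.
split=> [x | x y nxy cxy].
  by rewrite cross_compl cardsD setIC cross_class card_class card_cross.
have cross_sub : N x :|: N y \subset [set u | col u == ~~ col y].
  apply/subsetP => u; rewrite in_setU inE.
  by case/orP => /col_cross; rewrite ?cxy => ->.
rewrite !cross_compl cxy -setDUr cardsD (setIidPr cross_sub) card_class.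
by rewrite cardsU !card_cross card_crossI // addnn -mul2n.
Qed.

Lemma design_identity : 0 < V -> l * (V - 1) = k * (k - 1).
Proof.
move=> V_gt0; have /card_gt0P[x _] : 0 < #|[set x | col x == true]| by rewrite card_class.
pose S := [set y | col y == col x] :\ x.
have card_S : #|S| = V - 1.
  by have := cardsD1 x [set y | col y == col x]; rewrite /S card_class inE eqxx /=; lia.
have := sum_card_setI N S (N x).
rewrite (eq_bigr (fun _ => l)) => [|y]; last first.
  by rewrite !inE => /andP[nyx /eqP cyx]; apply: card_crossI.
rewrite [RHS](eq_bigr (fun _ => k - 1)) => [|B xB]; last first.
  have -> : [set y in S | B \in N y] = N B :\ x.
    apply/setP => y; rewrite inE mem_crossC !in_setD1 -andbA; congr (_ && _).
    by apply/andb_idl; rewrite inE => /col_cross->; rewrite (col_cross xB) negbK.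
  by have := cardsD1 x (N B); rewrite card_cross mem_crossC xB /=; lia.
by rewrite !sum_nat_const card_S card_cross mulnC.
Qed.

Lemma card_cross_lt_class : 0 < V -> 0 < l < k -> k < V.
Proof.
move=> V_gt0 /andP[l_gt0 lk]; have design_eq := design_identity V_gt0.
have /card_gt0P[x _] : 0 < #|[set x | col x == true]| by rewrite card_class.
have : k <= V.
  rewrite -(card_cross x) -(card_class (~~ col x)); apply/subset_leq_card/subsetP.
  by move=> u /col_cross; rewrite inE => ->.
rewrite leq_eqVlt => /orP[/eqP kV|//]; rewrite kV in design_eq lk; nia.
Qed.

End SymmetricDesign.

Lemma card_bicoloured (T : finType) (col : T -> bool) (V : nat) :
  (forall c, #|[set x | col x == c]| = V) -> #|T| = V + V.
Proof.
move=> card_class; rewrite -{1}(card_class true) -(card_class false) -cardsT.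
rewrite -(cardsID [set x | col x == true] [set: T]).
by congr (_ + _); apply: eq_card => x; rewrite !inE; case: (col x).
Qed.

Lemma card_le_3moved (T : finType) (col : T -> bool) (s : {perm T}) (V : nat) :
  (forall c, #|[set x | col x == c]| = V) ->
  (forall c, 2 * #|[set x | (col x == c) && (s x == x)]|
               <= V + #|[set x | (col x == ~~ c) && (s x != x)]|) ->
  #|T| <= 3 * moved s.
Proof.
move=> card_class bound.
pose F c := #|[set x | (col x == c) && (s x == x)]|.
pose M c := #|[set x | (col x == c) && (s x != x)]|.
have split_class c : F c + M c = V.
  rewrite -(card_class c) -(cardsID [set x | s x == x] [set x | col x == c]).
  by congr (_ + _); apply: eq_card => x; rewrite !inE andbC.
have split_moved : moved s = M true + M false.
  rewrite /moved -(cardsID [set x | col x == true] [set x | s x != x]).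
  by congr (_ + _); apply: eq_card => x; rewrite !inE [RHS]andbC;
    case: (col x); rewrite ?andbT ?andbF.
have bound_t : 2 * F true <= V + M false := bound true.
have bound_f : 2 * F false <= V + M true := bound false.
have := split_class true; have := split_class false.
rewrite (card_bicoloured card_class); lia.
Qed.

Lemma sym_design_motion (T : finType) (r : rel T) (col : T -> bool) (k l V : nat)
    (s : {perm T}) :
  symmetric r -> sym_design r col k l -> 0 < l -> k.+2 <= V ->
  (forall c, #|[set x | col x == c]| = V) ->
  (forall x y, r (s x) (s y) = r x y) -> (forall x, col (s x) = col x) -> s != 1%g ->
  #|T| <= 3 * moved s.
Proof.
move=> r_sym design l_gt0 kV card_class s_aut s_col s_nt.
have design_eq := design_identity r_sym design card_class (ltn_trans (ltn0Sn _) kV).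
have lk : l < k by nia.
have rC_sym : symmetric (fun a b => ~~ r a b) by move=> a b; rewrite /= r_sym.
have sC_aut a b : ~~ r (s a) (s b) = ~~ r a b by rewrite s_aut.
have designC := compl_sym_design design card_class.
have lC_gt0 : 0 < V - (2 * k - l) by nia.
have [x sx] : exists x, s x != x.
  apply/existsP; apply: contraNT s_nt => /existsPn s_fix.
  by apply/eqP/permP => x; rewrite perm1; apply/eqP/negbNE/s_fix.
have moved_col c : exists2 y, col y = c & s y != y.
  have [<-|cx] := eqVneq (col x) c; first by exists x.
  have [u xu su] := exists_moved_cross design s_aut s_col lk sx.
  by exists u; rewrite // (col_cross xu); move: cx; case: (col x); case: (c).
apply: (card_le_3moved card_class) => c.
have := fixed_le_moved r_sym design s_aut s_col l_gt0 (moved_col c).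
have := fixed_le_moved rC_sym designC sC_aut s_col lC_gt0 (moved_col c).
lia.
Qed.

Section CocktailParty.
Variables (T : finType) (e : rel T) (col : T -> bool) (V : nat).
Hypotheses (e_sym : symmetric e) (col_e : forall x y, e x y -> col x != col y).
Hypothesis card_class : forall c, #|[set x | col x == c]| = V.
Local Notation N' := (cross (fun a b => ~~ e a b) col).
Hypothesis card_nonadj : forall x, #|N' x| = 1.

Let partner x := odflt x [pick u in N' x].

Lemma mem_nonadj_partner x u : (u \in N' x) = (u == partner x).
Proof.
have /cards1P[a Na] : #|N' x| == 1 by rewrite card_nonadj.
suff -> : partner x = a by rewrite Na inE.
by rewrite /partner; case: pickP => [b|/(_ a)]; rewrite Na inE ?eqxx // => /eqP.
Qed.

Lemma adj_partner x y : col x != col y -> e x y = (y != partner x).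
Proof. by move=> cxy; rewrite -mem_nonadj_partner inE eq_sym cxy negbK. Qed.

Lemma col_partner x : col (partner x) = ~~ col x.
Proof. by apply: (@col_cross _ (fun a b => ~~ e a b)); rewrite mem_nonadj_partner. Qed.

Lemma partnerK : involutive partner.
Proof.
move=> x; have cxp : col x != col (partner x) by rewrite col_partner; case: (col x).
by apply/esym/eqP; rewrite -mem_nonadj_partner inE cxp e_sym adj_partner // eqxx.
Qed.

Lemma cocktail_of_nonadj1 : is_cocktail_party e.
Proof.
pose S := [set x | col x == false].
pose rep x := if col x then partner x else x.
have rep_S x : rep x \in S by rewrite /rep inE; case: ifP; rewrite ?col_partner => ->.
pose f x := (col x, enum_rank_in (rep_S x) (rep x)).
have f_rep x y : (f x).2 == (f y).2 = (rep x == rep y).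
  apply/eqP/eqP => [/(congr1 enum_val)|rxy]; first by rewrite !enum_rankK_in.
  by apply: enum_val_inj; rewrite !enum_rankK_in // -rxy.
exists #|S|, f; split.
  apply: inj_card_bij.
    move=> x y [cxy /eqP]; rewrite f_rep /rep -cxy.
    by case: (col x) => /eqP // /(can_inj partnerK).
  rewrite card_prod card_bool card_ord (card_class false).
  by rewrite (card_bicoloured card_class) mul2n addnn.
move=> x y; rewrite /cocktail_rel /= f_rep /rep.
case: (eqVneq (col x) (col y)) => [cxy|ncxy] /=.
  by apply/negbTE/negP => /col_e; rewrite cxy eqxx.
rewrite (adj_partner ncxy); move: ncxy; case: (col x); case: (col y) => //= _.
  by rewrite eq_sym.
by congr (~~ _); apply/eqP/eqP => ->; rewrite partnerK.
Qed.

End CocktailParty.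

Section BipartiteDiameterThree.
Variables (T : finType) (e : rel T) (col : T -> bool).
Hypotheses (e_sym : symmetric e) (e_irr : irreflexive e) (conn : gconnected e).
Hypothesis col_e : forall x y, e x y -> col x != col y.
Hypothesis diam3 : forall v w, gdist e v w <= 3.

Lemma cross_adj x : cross e col x = [set u | e x u].
Proof. by apply/setP => u; rewrite !inE andb_idl // eq_sym => /col_e. Qed.

Lemma drg_sym_design : distance_regular e -> exists k l, sym_design e col k l.
Proof.
case=> _ [f drg]; exists (f 0 1), (f 2 1); split=> [x | x y nxy cxy].
  have := drg x x 1; rewrite /= gdist_refl => /(_ isT) <-.
  by apply: eq_card => u; rewrite cross_adj !inE gdist_eq1 // andbb.
have := drg x y 1; rewrite /= (gdist_same_col conn col_e) // => /(_ isT) <-.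
by apply: eq_card => u; rewrite !cross_adj !inE gdist_eq1 // andbC.
Qed.

Lemma gdist3_design_bounds v w k l : sym_design e col k l -> gdist e v w = 3 -> 0 < l < k.
Proof.
move=> design d3; have [z d2 ezw] := gdist_pred_adj conn d3.
have [z' /eqP d1 ez'z] := gdist_pred_adj conn d2; rewrite gdist_eq1 // in d1.
have zv : z != v by rewrite -(gdist_eq0 v conn) d2.
have czv : col z = col v by rewrite (col_gdist conn col_e v z) d2 addbF.
rewrite -(card_crossI design zv czv) -(card_cross design z) card_gt0; apply/andP; split.
  by apply/set0Pn; exists z'; rewrite in_setI !cross_adj !inE e_sym ez'z.
apply/proper_card/properP; split; first exact: subsetIl.
exists w; first by rewrite cross_adj inE.
have nvw : ~~ e v w by rewrite -gdist_eq1 // d3.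
by rewrite in_setI !cross_adj !inE (negbTE nvw) andbF.
Qed.

End BipartiteDiameterThree.

Theorem proposition5p8 (T : finType) (e : rel T) :
  simple_graph e ->
  distance_regular e ->
  bipartite e ->
  diameter_eq e 3 ->
  ~ is_cocktail_party e ->
  forall s : {perm T}, is_graph_aut e s -> s != 1%g ->
    #|T| <= 12 * moved s.
Proof.
move=> [e_sym e_irr] drg [col col_e] [diam3 [v [w d3]]] not_cp s s_aut s_nt.
have conn := drg.1.
have [k [l design]] := drg_sym_design e_irr conn col_e diam3 drg.
have l_bounds := gdist3_design_bounds e_sym e_irr conn col_e design d3.
have /andP[l_gt0 lk] := l_bounds.
have [s_col | s_swap] := aut_col_cases conn col_e s_aut; last first.
  suff -> : moved s = #|T| by rewrite leq_pmull.
  rewrite /moved -cardsT; apply: eq_card => x; rewrite !inE.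
  by apply: contraNneq (s_swap x) => ->.
set V := #|[set x | col x == true]|.
have card_class c : #|[set x | col x == c]| = V.
  by case: c; rewrite // /V (card_col_classN e_sym design true) // (leq_ltn_trans _ lk).
have V_gt0 : 0 < V.
  by rewrite -(card_class (col v)); apply/card_gt0P; exists v; rewrite inE.
have kV := card_cross_lt_class e_sym design card_class V_gt0 l_bounds.
have k_neq : k != V.-1.
  apply: contra_notN not_cp => /eqP kV1.
  apply: (cocktail_of_nonadj1 e_sym col_e card_class).
  by move=> x; rewrite (compl_sym_design design card_class).1; lia.
have kV2 : k.+2 <= V by lia.
have := sym_design_motion e_sym design l_gt0 kV2 card_class s_aut s_col s_nt; lia.
Qed.
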